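(* Let $M$ be a matroid, $\mathcal{T}$ a tangle of $M$ of order $\theta$, and $N$ a minor of $M$ with $E(M)\setminus E(N) = \{e\}$. Let $\mathcal{T}'$ be the tangle of $N$ inherited from $\mathcal{T}$, and let $Z\subseteq E(N)$. \begin{enumerate} \item $r_{\mathcal{T}}(Z) - 1 \leq r_{\mathcal{T}'}(Z) \leq r_\mathcal{T}(Z)$; \item If $e\not\in \mathrm{cl}_\mathcal{T}(Z)$ and $r_\mathcal{T}(Z) < \theta$ then $r_{\mathcal{T}'}(Z) = r_{\mathcal{T}}(Z)$. \end{enumerate}
   Context: The connectivity function is $\lambda_M(X)=r_M(X)+r_M(E(M)\setminus X)-r(M)$. A tangle of order $\theta$ of $M$ is a collection $\mathcal{T}$ of subsets of $E(M)$ such that: every $X\in\mathcal{T}$ has $\lambda_M(X)<\theta$; for every $X$ with $\lambda_M(X)<\theta$, either $X\in\mathcal{T}$ or $E(M)\setminus X\in\mathcal{T}$; no three members of $\mathcal{T}$ cover $E(M)$; and $E(M)\setminus\{e\}\notin\mathcal{T}$ for each $e\in E(M)$. The tangle matroid $M(\mathcal{T})$ has rank function $r_\mathcal{T}(X)=\min\{\lambda_M(Y): X\subseteq Y\in\mathcal{T}\}$ if such $Y$ exists, and $\theta$ otherwise; $\mathrm{cl}_\mathcal{T}$ denotes the closure operator of $M(\mathcal{T})$. For a minor $N$ with $E(M)\setminus E(N)=S$, the tangle of $N$ inherited from $\mathcal{T}$ is $\mathcal{T}'=\{X\setminus S: X\in\mathcal{T},\ \lambda_N(X)<\theta-|S|\}$,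 a tangle of $N$ of order $\theta-|S|$; $r_{\mathcal{T}'}$ is the rank function of $N(\mathcal{T}')$. *)

From mathcomp Require Import all_boot.
Set Implicit Arguments. Unset Strict Implicit. Unset Printing Implicit Defensive.

Record matroid (T : finType) := Matroid {
  ground : {set T};
  rk : {set T} -> nat;
  rk_card : forall X : {set T}, X \subset ground -> rk X <= #|X|;
  rk_mono : forall X Y : {set T}, X \subset Y -> Y \subset ground -> rk X <= rk Y;
  rk_submod : forall X Y : {set T}, X \subset ground -> Y \subset ground ->
     rk (X :|: Y) + rk (X :&: Y) <= rk X + rk Y
}.

Section Defs.
Variable T : finType.
Implicit Types (M N : matroid T) (X Y Z : {set T}) (Tg : {set {set T}}).

Definition conn M X : nat :=
  rk M X + rk M (ground M :\: X) - rk M (ground M).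

(* N is a minor of M: N = M / C \ D for disjoint C, D subsets of E(M) *)
Definition is_minor N M : Prop :=
  exists C D : {set T},
    [/\ [disjoint C & D], C :|: D \subset ground M,
        ground N = ground M :\: (C :|: D) &
        forall X, X \subset ground N -> rk N X = rk M (X :|: C) - rk M C].

Definition is_tangle M (theta : nat) Tg : Prop :=
  [/\ (forall X, X \in Tg -> X \subset ground M /\ conn M X < theta),
      (forall X, X \subset ground M -> conn M X < theta ->
          X \in Tg \/ (ground M :\: X) \in Tg),
      (forall A B C : {set T}, A \in Tg -> B \in Tg -> C \in Tg ->
          ~ (ground M \subset A :|: B :|: C)) &
      (forall x, x \in ground M -> (ground M :\ x) \notin Tg)].

(* rank function of the tangle matroid: min of lambda(Y) over Y in Tg
   containing X, or theta if there is no such Y (all such lambda(Y) are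
   < theta, so the min with default theta is the intended value) *)
Definition tangle_rank M (theta : nat) Tg X : nat :=
  \big[minn/theta]_(Y in Tg | X \subset Y) conn M Y.

Definition tangle_cl M (theta : nat) Tg X : {set T} :=
  [set x in ground M | tangle_rank M theta Tg (x |: X) == tangle_rank M theta Tg X].

Definition inherited_tangle M N (theta : nat) Tg : {set {set T}} :=
  [set X :\: (ground M :\: ground N) | X in Tg &
       conn N (X :\: (ground M :\: ground N)) < theta - #|ground M :\: ground N| ].

End Defs.

(* Deleting or contracting a single element e changes connectivity by at most
   one: lambda_N(X - e) <= lambda_M(X) <= lambda_N(X - e) + 1.  Comparing the
   two minima defining r_T and r_T' member by member gives (1).  For (2), let
   X - e be a member of T' containing Z.  Then e + X has connectivity below
   theta, so it lies in T, for otherwise X, E - (e + X) and {e} would be three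
   members of T covering E.  Hence
   r_T(Z) < r_T(Z + e) <= lambda_M(e + X) <= lambda_N(X - e) + 1. *)

From mathcomp Require Import all_boot order zify.
Import Order.TTheory.

Set Implicit Arguments.
Unset Strict Implicit.
Unset Printing Implicit Defensive.

Section Rank.
Variables (T : finType) (M : matroid T).
Implicit Types X Y : {set T}.
Local Notation E := (ground M).
Local Notation r := (rk M).

Lemma rk_set0 : r set0 = 0.
Proof. by apply/eqP; rewrite -leqn0 -(cards0 T) rk_card ?sub0set. Qed.

Lemma rk_set1 e : e \in E -> r [set e] <= 1.
Proof. by move=> eE; rewrite -(cards1 e) rk_card ?sub1set. Qed.

Lemma rk_subadd X Y : X \subset E -> Y \subset E -> r (X :|: Y) <= r X + r Y.
Proof. by move=> XE YE; apply: leq_trans (leq_addr _ _) (rk_submod XE YE). Qed.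

Lemma rk_setU1 e X : e \in E -> X \subset E -> r (e |: X) <= (r X).+1.
Proof.
move=> eE XE; rewrite setUC -addn1.
by apply: leq_trans (rk_subadd XE _) _; rewrite ?sub1set ?leq_add2l ?rk_set1.
Qed.

Lemma conn_setC X : X \subset E -> conn M (E :\: X) = conn M X.
Proof. by move=> XE; rewrite /conn setDDr setDv set0U (setIidPr XE) addnC. Qed.

End Rank.

Lemma setUDK (T : finType) (A B : {set T}) : A \subset B -> A :|: (B :\: A) = B.
Proof. by move=> AB; rewrite -{2}(setID B A) (setIidPr AB). Qed.

Section ConnSingleElement.
Variables (T : finType) (M N : matroid T) (e : T) (A : {set T}).
Hypotheses (eE : e \in ground M) (EN : ground N = ground M :\ e).
Local Notation E := (ground M).
Hypothesis AE' : A \subset E :\ e.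
Local Notation r := (rk M).
Implicit Types X : {set T}.
Let B := (E :\ e) :\: A.

Let E'E : E :\ e \subset E. Proof. exact: subsetDl. Qed.
Let AE : A \subset E. Proof. exact: subset_trans AE' E'E. Qed.
Let BE : B \subset E. Proof. exact: subset_trans (subsetDl _ _) E'E. Qed.
Let eE1 : [set e] \subset E. Proof. by rewrite sub1set. Qed.
Let eAE : e |: A \subset E. Proof. by rewrite subUset eE1 AE. Qed.
Let eBE : e |: B \subset E. Proof. by rewrite subUset eE1 BE. Qed.
Let eA : e \notin A. Proof. by apply/negP => /(subsetP AE'); rewrite !inE eqxx. Qed.

Let EeA : E :\: (e |: A) = B. Proof. by rewrite /B setDDl. Qed.
Let eAUB : (e |: A) :|: B = E. Proof. by rewrite -EeA setUDK. Qed.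
Let eAUeB : (e |: A) :|: (e |: B) = E. Proof. by rewrite -setUUr setUDK // setD1K. Qed.

Let conn_setU1 : conn M (e |: A) = r (e |: A) + r B - r E.
Proof. by rewrite /conn EeA. Qed.

Let rk_setU1_split : r E <= r (e |: A) + r B.
Proof. by rewrite -{1}eAUB rk_subadd. Qed.

Lemma conn_deletion_bounds :
  (forall X, X \subset ground N -> rk N X = r X) ->
  conn N A <= conn M (e |: A) <= (conn N A).+1.
Proof.
move=> rkN; have -> : conn N A = r A + r B - r (E :\ e).
  by rewrite /conn !rkN ?EN ?subsetDl.
have eAUE' : (e |: A) :|: (E :\ e) = E.
  by rewrite setUAC setD1K // (setUidPl AE).
have eAIE' : (e |: A) :&: (E :\ e) = A.
  by rewrite setIDA (setIidPl eAE) setU1K.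
have := rk_submod eAE E'E; rewrite eAUE' eAIE' => submod.
have := rk_subadd AE BE; rewrite setUDK // => subadd.
have := rk_setU1 eE AE; have := rk_mono E'E (subxx E); have := rk_setU1_split.
rewrite conn_setU1; lia.
Qed.

Lemma conn_contraction_bounds :
  (forall X, X \subset ground N -> rk N X = r (X :|: [set e]) - r [set e]) ->
  conn N A <= conn M (e |: A) <= (conn N A).+1.
Proof.
move=> rkN; have eAIeB : (e |: A) :&: (e |: B) = [set e].
  by rewrite -setUIr /B setIDA (setIidPl AE') setDv setU0.
have := rk_submod eAE eBE; rewrite eAUeB eAIeB => submod.
have := rk_subadd BE eE1; rewrite setUC => subadd.
have := rk_mono (subsetUl [set e] A) eAE; have := rk_mono (subsetUl [set e] B) eBE.
have := rk_mono (subsetUr [set e] B) eBE; have := rk_mono eE1 (subxx E).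
have := rk_set1 eE; have := rk_setU1_split; rewrite conn_setU1 /conn !rkN ?EN ?subsetDl //.
rewrite !(setUC _ [set e]) setD1K // -/B; lia.
Qed.

End ConnSingleElement.

Section SingleElementMinor.
Variables (T : finType) (M N : matroid T) (e : T).
Hypotheses (NM : is_minor N M) (Ee : ground M :\: ground N = [set e]).
Implicit Types X : {set T}.

Lemma single_element_minor_cases :
  [/\ e \in ground M, ground N = ground M :\ e &
      (forall X, X \subset ground N -> rk N X = rk M X) \/
      (forall X, X \subset ground N -> rk N X = rk M (X :|: [set e]) - rk M [set e])].
Proof.
case: NM => C [D [_ CDE EN rkN]].
have eE : e \in ground M by move: (set11 e); rewrite -Ee inE => /andP[].
have NE : ground N \subset ground M by rewrite EN subsetDl.
have CE : C \subset [set e].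
  by rewrite -Ee EN setDDr setDv set0U subsetI (subset_trans (subsetUl C D) CDE) subsetUl.
split=> //; first by rewrite -Ee setDDr setDv set0U (setIidPr NE).
move: CE; rewrite subset1 => /orP[/eqP <- | /eqP C0]; first by right.
by left=> X XN; rewrite rkN // C0 setU0 rk_set0 subn0.
Qed.

Lemma conn_single_element_minor X :
  X \subset ground M -> conn N (X :\ e) <= conn M X <= (conn N (X :\ e)).+1.
Proof.
have [eE EN rkN] := single_element_minor_cases.
(* Complementation in E(M) and in E(N) preserves both sides, so e may be put in X. *)
wlog eX : X / e \in X => [hwlog XE|XE].
  case: (boolP (e \in X)) => [eX | eNX]; first exact: hwlog.
  have XN : X :\ e \subset ground N by rewrite EN setSD.
  have -> : X :\ e = ground N :\: ((ground M :\: X) :\ e).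
    apply/setP => x; rewrite EN !inE.
    by case xX: (x \in X); rewrite ?(subsetP XE x xX) ?andbF ?andbT //= andNb.
  have XcN : (ground M :\: X) :\ e \subset ground N by rewrite EN setSD ?subsetDl.
  rewrite (conn_setC XcN) -(conn_setC XE); apply: hwlog; last exact: subsetDl.
  by rewrite !inE eNX.
have AE' : X :\ e \subset ground M :\ e by rewrite setSD.
rewrite -{2 3}(setD1K eX).
by case: rkN => rkN; [exact: conn_deletion_bounds | exact: conn_contraction_bounds].
Qed.

End SingleElementMinor.

Section TangleRank.
Context {T : finType} {M : matroid T} {theta : nat} {Tg : {set {set T}}}.
Implicit Types X Y : {set T}.
Local Notation rT := (tangle_rank M theta Tg).

Lemma tangle_rank_le_theta X : rT X <= theta.
Proof. by rewrite /tangle_rank -minEnat -leEnat; apply: bigmin_le_id. Qed.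

Lemma tangle_rank_le_conn X Y : Y \in Tg -> X \subset Y -> rT X <= conn M Y.
Proof.
by move=> YT XY; rewrite /tangle_rank -minEnat -leEnat; apply: bigmin_le_cond; rewrite YT.
Qed.

Lemma tangle_rank_geP m X :
  reflect (m <= theta /\ forall Y, Y \in Tg -> X \subset Y -> m <= conn M Y) (m <= rT X).
Proof.
rewrite /tangle_rank -minEnat -leEnat; apply: (iffP (bigmin_geP _ _ _ _)) => -[m_le h].
  by split=> // Y YT XY; apply: h; rewrite YT.
by split=> // Y /andP[]; apply: h.
Qed.

Lemma tangle_rank_mono X Y : X \subset Y -> rT X <= rT Y.
Proof.
move=> XY; apply/tangle_rank_geP; split=> [|Y' Y'T YY']; first exact: tangle_rank_le_theta.
exact: tangle_rank_le_conn Y'T (subset_trans XY YY').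
Qed.

End TangleRank.

Section Tangle.
Variables (T : finType) (M : matroid T) (theta : nat) (Tg : {set {set T}}).
Hypothesis tangleT : is_tangle M theta Tg.
Local Notation E := (ground M).

Lemma tangle_set1 e : e \in E -> 1 < theta -> [set e] \in Tg.
Proof.
case: tangleT => _ T2 _ T4 eE theta_gt1.
have eE1 : [set e] \subset E by rewrite sub1set.
have : conn M [set e] < theta.
  have := rk_set1 eE; have := rk_mono (subsetDl E [set e]) (subxx E).
  rewrite /conn; lia.
by case/(T2 _ eE1) => // E'T; move: (T4 e eE); rewrite E'T.
Qed.

Lemma tangle_setU1 e X :
  e \in E -> 1 < theta -> X \in Tg -> conn M (e |: X) < theta -> e |: X \in Tg.
Proof.
move=> eE theta_gt1 XT eXlt; case: tangleT => T1 T2 T3 _.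
have eXE : e |: X \subset E by rewrite subUset sub1set eE (T1 X XT).1.
case: (T2 _ eXE eXlt) => // eXcT; exfalso.
apply: (T3 _ _ _ XT eXcT (tangle_set1 eE theta_gt1)).
apply/subsetP => x xE; rewrite !inE xE /=.
by case: (x == e); case: (x \in X); rewrite ?orbT.
Qed.

End Tangle.

Section InheritedTangle.
Variables (T : finType) (M N : matroid T) (theta : nat) (Tg : {set {set T}}) (e : T).
Hypotheses (tangleT : is_tangle M theta Tg) (NM : is_minor N M)
           (Ee : ground M :\: ground N = [set e]).
Implicit Types X Y Z : {set T}.
Local Notation rT := (tangle_rank M theta Tg).
Local Notation rT' := (tangle_rank N (theta - 1) (inherited_tangle M N theta Tg)).

Lemma mem_inherited_tangle1 Y :
  Y \in inherited_tangle M N theta Tg <->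
  (exists2 X, X \in Tg & Y = X :\ e) /\ conn N Y < theta - 1.
Proof.
rewrite /inherited_tangle Ee cards1; split.
  by case/imsetP => X; rewrite inE => /andP[XT lt] ->; split=> //; exists X.
by case=> -[X XT ->] lt; apply/imsetP; exists X; rewrite ?inE ?XT.
Qed.

Let tangle_sub X : X \in Tg -> X \subset ground M.
Proof. by case: tangleT => T1 _ _ _ /T1[]. Qed.

Let conn_bounds X :
  X \subset ground M -> conn N (X :\ e) <= conn M X <= (conn N (X :\ e)).+1.
Proof. exact: conn_single_element_minor. Qed.

Lemma inherited_tangle_rank_le Z : Z \subset ground N -> rT' Z <= rT Z.
Proof.
have [_ EN _] := single_element_minor_cases NM Ee.
move=> ZN; apply/tangle_rank_geP; split=> [|X XT ZX].
  exact: leq_trans (tangle_rank_le_theta _) (leq_subr 1 theta).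
have /andP[connN_le _] := conn_bounds (tangle_sub XT); apply: leq_trans connN_le.
have ZXe : Z \subset X :\ e by rewrite subsetD1 ZX; move: ZN; rewrite EN subsetD1 => /andP[].
case: (ltnP (conn N (X :\ e)) (theta - 1)) => [lt | ge].
  by apply: tangle_rank_le_conn ZXe; apply/mem_inherited_tangle1; split=> //; exists X.
exact: leq_trans (tangle_rank_le_theta _) ge.
Qed.

Lemma inherited_tangle_rank_ge Z : rT Z - 1 <= rT' Z.
Proof.
apply/tangle_rank_geP; split=> [|Y /mem_inherited_tangle1[[X XT ->] _] ZY].
  by rewrite leq_sub2r ?tangle_rank_le_theta.
have /andP[_ conn_le] := conn_bounds (tangle_sub XT).
have : rT Z <= conn M X := tangle_rank_le_conn XT (subset_trans ZY (subsetDl _ _)).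
lia.
Qed.

Lemma inherited_tangle_rank_eq Z :
  Z \subset ground N -> e \notin tangle_cl M theta Tg Z -> rT Z < theta -> rT' Z = rT Z.
Proof.
have [eE _ _] := single_element_minor_cases NM Ee.
move=> ZN eNcl rT_lt; apply/eqP; rewrite eqn_leq inherited_tangle_rank_le //=.
apply/tangle_rank_geP; split=> [|Y /mem_inherited_tangle1[[X XT ->] lt] ZY].
  by move: rT_lt; lia.
have rT_ltU1 : rT Z < rT (e |: Z).
  rewrite ltn_neqAle tangle_rank_mono ?subsetUr // andbT eq_sym.
  by move: eNcl; rewrite inE eE.
have eXe : (e |: X) :\ e = X :\ e by rewrite setDUl setDv set0U.
have eXE : e |: X \subset ground M by rewrite subUset sub1set eE tangle_sub.
have /andP[_] := conn_bounds eXE; rewrite eXe => conn_le.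
have eXT : e |: X \in Tg by apply: (tangle_setU1 tangleT); rewrite ?eE ?XT //; lia.
have ZeX : e |: Z \subset e |: X := setUS _ (subset_trans ZY (subsetDl _ _)).
have : rT (e |: Z) <= conn M (e |: X) := tangle_rank_le_conn eXT ZeX.
lia.
Qed.

End InheritedTangle.

Theorem lemma2p31 (T : finType) (M N : matroid T) (theta : nat)
    (Tg : {set {set T}}) (e : T) (Z : {set T}) :
  is_tangle M theta Tg ->
  is_minor N M ->
  ground M :\: ground N = [set e] ->
  Z \subset ground N ->
  (tangle_rank M theta Tg Z - 1
     <= tangle_rank N (theta - 1) (inherited_tangle M N theta Tg) Z
     <= tangle_rank M theta Tg Z)
  /\
  (e \notin tangle_cl M theta Tg Z -> tangle_rank M theta Tg Z < theta ->
     tangle_rank N (theta - 1) (inherited_tangle M N theta Tg) Z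
       = tangle_rank M theta Tg Z).
Proof.
move=> tangleT NM Ee ZN; split; last exact: (inherited_tangle_rank_eq tangleT NM Ee ZN).
by rewrite (inherited_tangle_rank_ge tangleT NM Ee) (inherited_tangle_rank_le tangleT NM Ee ZN).
Qed.
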